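(* Assume $\alpha=\beta\ge1$ and $p\in\mathbb R\setminus\{0,1\}$. Let $\mathbf U=(U,V)$ with multiplier $\Lambda$ be the similarity profile and let $\mathbf u=(u,v)$ be a solution of the scaled system with $\rho=u/U$, $\zeta=v/V$. Then $\frac{\mathrm d}{\mathrm d\tau}\mathcal E_p(\mathbf u(\tau)|\mathbf U)=-\mathcal D_p(\rho,\zeta)$ with $$\mathcal D_p(\rho,\zeta)=\mathcal I_{p,\mathrm{Fisher}}(\rho,\zeta)+\tfrac12\,\mathcal E_p(\mathbf u|\mathbf U)-\mathcal I_{p,\Lambda}(\rho,\zeta)+e^\tau\mathcal D_{p,\mathrm{react}}(\rho,\zeta),$$ where $\mathcal D_{p,\mathrm{react}}(\rho,\zeta):=\int_{\mathbb R}kU^\alpha\frac{\alpha}{p-1}\big(\zeta^{p-1}-\rho^{p-1}\big)\big(\zeta^\alpha-\rho^\alpha\big)\mathrm dy\ge0$, $\mathcal I_{p,\mathrm{Fisher}}(\rho,\zeta):=\int_{\mathbb R}\big(d_1U\rho^{p-2}\rho_y^2+d_2V\zeta^{p-2}\zeta_y^2\big)\mathrm dy\ge0$, and $\mathcal I_{p,\Lambda}(\rho,\zeta):=\int_{\mathbb R}\frac1p\big(\zeta^p-\rho^p\big)\alpha\Lambda\,\mathrm dy$.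
   Context: Fix $d_1,d_2,k>0$, real stoichiometric coefficients $\alpha,\beta\ge1$ and $A_-,A_+>0$. The similarity profile is a triple $(U,V,\Lambda)$ with $U,V\in\mathrm C^2(\mathbb R)$ positive, bounded and bounded away from $0$, $\Lambda:\mathbb R\to\mathbb R$, satisfying $d_1U''+\tfrac y2U'+\alpha\Lambda=0$, $d_2V''+\tfrac y2V'-\beta\Lambda=0$, $U^\alpha=V^\beta$ on $\mathbb R$, and $U(\pm\infty)=A_\pm^\beta$, $V(\pm\infty)=A_\pm^\alpha$. The scaled system is $u_\tau=d_1u_{yy}+\tfrac y2u_y+e^\tau\alpha k(v^\beta-u^\alpha)$, $v_\tau=d_2v_{yy}+\tfrac y2v_y-e^\tau\beta k(v^\beta-u^\alpha)$ for $\tau>0$, $y\in\mathbb R$, with $(u,v)(\tau,\pm\infty)=(A_\pm^\beta,A_\pm^\alpha)$. A ''solution'' is a positive classical solution for which the relative entropy is finite and differentiable in $\tau$ with differentiation under the integral allowed, all integrals appearing are finite, and integrations by parts over $\mathbb R$ produce no boundary terms ($\rho,\zeta\to1$ at $\pm\infty$ with sufficient decay). Relative densities $\rho=u/U$, $\zeta=v/V$. Entropy functions: $F_p(z)=\frac{1}{p(p-1)}(z^p-pz+p-1)$ for $p\notin\{0,1\}$, $F_1(z)=z\log z-z+1$, $F_0(z)=z-\log z-1$. Relative entropy $\mathcal E_p(\mathbf u|\mathbf U)=\int_{\mathbb R}\big(UF_p(\rho)+VF_p(\zeta)\big)\mathrm dy$. *)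

From Stdlib Require Import Reals Lra.
From Coquelicot Require Import Coquelicot.
Open Scope R_scope.

Definition Fent (p z : R) : R :=
  if Req_EM_T p 1 then z * ln z - z + 1
  else if Req_EM_T p 0 then z - ln z - 1
  else / (p * (p - 1)) * (Rpower z p - p * z + p - 1).

Definition intR (f : R -> R) : R :=
  RInt_gen f (Rbar_locally m_infty) (Rbar_locally p_infty).
Definition integrableR (f : R -> R) : Prop :=
  ex_RInt_gen f (Rbar_locally m_infty) (Rbar_locally p_infty).

Definition is_profile (d1 d2 alpha beta Am Ap : R) (U V Lam : R -> R) : Prop :=
  (exists c C, 0 < c /\ forall y, c <= U y <= C /\ c <= V y <= C) /\
  (forall y, ex_derive U y /\ ex_derive (Derive U) y /\
             continuous (Derive (Derive U)) y) /\
  (forall y, ex_derive V y /\ ex_derive (Derive V) y /\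
             continuous (Derive (Derive V)) y) /\
  (forall y, d1 * Derive (Derive U) y + y / 2 * Derive U y + alpha * Lam y = 0) /\
  (forall y, d2 * Derive (Derive V) y + y / 2 * Derive V y - beta * Lam y = 0) /\
  (forall y, Rpower (U y) alpha = Rpower (V y) beta) /\
  is_lim U m_infty (Rpower Am beta) /\ is_lim U p_infty (Rpower Ap beta) /\
  is_lim V m_infty (Rpower Am alpha) /\ is_lim V p_infty (Rpower Ap alpha).

Definition is_classical_solution (d1 d2 k alpha beta Am Ap : R)
    (u v : R -> R -> R) : Prop :=
  forall t, 0 < t ->
  (forall y, 0 < u t y /\ 0 < v t y) /\
  (forall y, ex_derive (fun s => u s y) t /\ ex_derive (fun z => u t z) y /\
             ex_derive (Derive (fun z => u t z)) y /\
             ex_derive (fun s => v s y) t /\ ex_derive (fun z => v t z) y /\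
             ex_derive (Derive (fun z => v t z)) y) /\
  (forall y,
     continuous (fun q : R * R => u (fst q) (snd q)) (t, y) /\
     continuous (fun q : R * R => Derive (fun s => u s (snd q)) (fst q)) (t, y) /\
     continuous (fun q : R * R => Derive (fun z => u (fst q) z) (snd q)) (t, y) /\
     continuous (fun q : R * R =>
                   Derive (Derive (fun z => u (fst q) z)) (snd q)) (t, y) /\
     continuous (fun q : R * R => v (fst q) (snd q)) (t, y) /\
     continuous (fun q : R * R => Derive (fun s => v s (snd q)) (fst q)) (t, y) /\
     continuous (fun q : R * R => Derive (fun z => v (fst q) z) (snd q)) (t, y) /\
     continuous (fun q : R * R =>
                   Derive (Derive (fun z => v (fst q) z)) (snd q)) (t, y)) /\
  (forall y,
     Derive (fun s => u s y) t =
       d1 * Derive (Derive (fun z => u t z)) y + y / 2 * Derive (fun z => u t z) y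
       + exp t * alpha * k * (Rpower (v t y) beta - Rpower (u t y) alpha)) /\
  (forall y,
     Derive (fun s => v s y) t =
       d2 * Derive (Derive (fun z => v t z)) y + y / 2 * Derive (fun z => v t z) y
       - exp t * beta * k * (Rpower (v t y) beta - Rpower (u t y) alpha)) /\
  is_lim (fun y => u t y) m_infty (Rpower Am beta) /\
  is_lim (fun y => u t y) p_infty (Rpower Ap beta) /\
  is_lim (fun y => v t y) m_infty (Rpower Am alpha) /\
  is_lim (fun y => v t y) p_infty (Rpower Ap alpha).

Definition ent_density (p : R) (U V : R -> R) (u v : R -> R -> R) (t y : R) : R :=
  U y * Fent p (u t y / U y) + V y * Fent p (v t y / V y).

Definition rel_entropy (p : R) (U V : R -> R) (u v : R -> R -> R) (t : R) : R :=
  intR (ent_density p U V u v t).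

Definition fisher_density (p d1 d2 : R) (U V : R -> R) (u v : R -> R -> R)
    (t y : R) : R :=
  d1 * U y * Rpower (u t y / U y) (p - 2) * (Derive (fun z => u t z / U z) y) ^ 2
  + d2 * V y * Rpower (v t y / V y) (p - 2) * (Derive (fun z => v t z / V z) y) ^ 2.

Definition lambda_density (p alpha : R) (U V Lam : R -> R) (u v : R -> R -> R)
    (t y : R) : R :=
  / p * (Rpower (v t y / V y) p - Rpower (u t y / U y) p) * alpha * Lam y.

Definition react_density (p k alpha : R) (U V : R -> R) (u v : R -> R -> R)
    (t y : R) : R :=
  k * Rpower (U y) alpha * (alpha / (p - 1))
  * (Rpower (v t y / V y) (p - 1) - Rpower (u t y / U y) (p - 1))
  * (Rpower (v t y / V y) alpha - Rpower (u t y / U y) alpha).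

Definition I_Fisher p d1 d2 U V u v t := intR (fisher_density p d1 d2 U V u v t).
Definition I_Lambda p alpha U V Lam u v t := intR (lambda_density p alpha U V Lam u v t).
Definition D_react p k alpha U V u v t := intR (react_density p k alpha U V u v t).

Definition D_total p d1 d2 k alpha U V Lam u v t :=
  I_Fisher p d1 d2 U V u v t + / 2 * rel_entropy p U V u v t
  - I_Lambda p alpha U V Lam u v t + exp t * D_react p k alpha U V u v t.

(** The technical requirements in the notion of "solution": finiteness of
    all integrals, differentiability of the entropy with differentiation
    under the integral sign, and vanishing of the boundary terms produced
    by integrating by parts over R. *)
Definition solution_technical (p d1 d2 k alpha : R) (U V Lam : R -> R)
    (u v : R -> R -> R) : Prop :=
  forall t, 0 < t ->
  integrableR (ent_density p U V u v t) /\
  integrableR (fun y => Derive (fun s => ent_density p U V u v s y) t) /\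
  integrableR (fisher_density p d1 d2 U V u v t) /\
  integrableR (lambda_density p alpha U V Lam u v t) /\
  integrableR (react_density p k alpha U V u v t) /\
  is_derive (rel_entropy p U V u v) t
    (intR (fun y => Derive (fun s => ent_density p U V u v s y) t)) /\
  (forall l : Rbar, (l = m_infty \/ l = p_infty) ->
     is_lim (fun y => d1 * U y * Derive (fun z => u t z / U z) y
                      * Derive (Fent p) (u t y / U y)) l 0 /\
     is_lim (fun y => (d1 * Derive U y + y / 2 * U y) * Fent p (u t y / U y)) l 0 /\
     is_lim (fun y => d2 * V y * Derive (fun z => v t z / V z) y
                      * Derive (Fent p) (v t y / V y)) l 0 /\
     is_lim (fun y => (d2 * Derive V y + y / 2 * V y) * Fent p (v t y / V y)) l 0).

From Stdlib Require Import Reals Lra FunctionalExtensionality.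
From Coquelicot Require Import Coquelicot.
Open Scope R_scope.

(* For one component (f, g), with r = f/g and F = F_p, consider the flux
   d g r' F'(r) + (d g' + y g/2) F(r).  Substituting the scaled equation for f and the
   profile equation for g, its y-derivative becomes the time derivative of g F(r), plus
   a Fisher term, half the entropy density, and the Lambda and reaction contributions;
   U and V see alpha Lambda with opposite signs, so the Lambda terms of the two
   components combine into (zeta^p - rho^p)/p.  The flux vanishes at +-infinity, so
   integrating over R yields the entropy identity.  For the sign of the reaction term,
   U^alpha = V^alpha turns v^alpha - u^alpha into U^alpha (zeta^alpha - rho^alpha), and
   q (x^q - y^q) has the sign of x - y for every real q. *)

Lemma Fent_Rpower p x : p <> 0 -> p <> 1 ->
  Fent p x = / (p * (p - 1)) * (Rpower x p - p * x + p - 1).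
Proof.
  intros Hp0 Hp1. unfold Fent.
  destruct (Req_EM_T p 1); [contradiction|].
  destruct (Req_EM_T p 0); [contradiction|reflexivity].
Qed.

Lemma exp_pred_mul_ln q x : 0 < x -> exp ((q - 1) * ln x) = exp (q * ln x) / x.
Proof.
  intros Hx. replace ((q - 1) * ln x) with (q * ln x + - ln x) by ring.
  rewrite exp_plus, exp_Ropp, exp_ln by exact Hx. reflexivity.
Qed.

Lemma Derive_Fent p x : p <> 0 -> p <> 1 -> 0 < x ->
  Derive (Fent p) x = (Rpower x (p - 1) - 1) / (p - 1).
Proof.
  intros Hp0 Hp1 Hx.
  rewrite (Derive_ext _ (fun x => / (p * (p - 1)) * (exp (p * ln x) - p * x + p - 1)))
    by (intros; rewrite Fent_Rpower; auto).
  apply is_derive_unique. auto_derive.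
  - repeat split; auto.
  - unfold Rpower. rewrite exp_pred_mul_ln by exact Hx. field. lra.
Qed.

Lemma Rpower_monotone_sign q x y : 0 < x <= y -> 0 <= q * (Rpower y q - Rpower x q).
Proof.
  intros Hxy. destruct (Rle_lt_dec 0 q) as [Hq|Hq].
  - pose proof (Rle_Rpower_l x y q Hq Hxy). nra.
  - assert (Hinv : forall z, 0 < z -> Rpower z q = Rpower (/ z) (- q)).
    { intros z Hz. unfold Rpower. rewrite ln_Rinv by exact Hz. f_equal. ring. }
    rewrite !Hinv by lra.
    assert (Hyx : 0 < / y <= / x).
    { split; [apply Rinv_0_lt_compat; lra | apply Rinv_le_contravar; lra]. }
    pose proof (Rle_Rpower_l (/ y) (/ x) (- q) ltac:(lra) Hyx). nra.
Qed.

Lemma Rpower_sub_mul_nonneg q r x y : 0 < x -> 0 < y ->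
  0 <= q * r * ((Rpower x q - Rpower y q) * (Rpower x r - Rpower y r)).
Proof.
  intros Hx Hy. destruct (Rle_lt_dec x y) as [Hxy|Hyx].
  - pose proof (Rpower_monotone_sign q x y (conj Hx Hxy)).
    pose proof (Rpower_monotone_sign r x y (conj Hx Hxy)). nra.
  - pose proof (Rpower_monotone_sign q y x (conj Hy (Rlt_le _ _ Hyx))).
    pose proof (Rpower_monotone_sign r y x (conj Hy (Rlt_le _ _ Hyx))). nra.
Qed.

Lemma intR_nonneg (f : R -> R) : integrableR f -> (forall x, 0 <= f x) -> 0 <= intR f.
Proof.
  intros Hint Hf.
  assert (Habs : norm (intR f) <= intR f).
  { apply (RInt_gen_norm (V := R_CompleteNormedModule) f f); try exact (RInt_gen_correct f Hint).
    - exists (fun x => x < 0) (fun y => 0 < y); [exists 0 | exists 0 | simpl]; auto.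
      intros x y Hx Hy; lra.
    - apply filter_forall. intros ab x _.
      unfold norm; simpl; unfold abs; simpl. rewrite Rabs_pos_eq by apply Hf. lra. }
  exact (Rle_trans _ _ _ (norm_ge_0 (intR f)) Habs).
Qed.

Lemma continuous_Rdiv (f g : R -> R) x :
  continuous f x -> continuous g x -> g x <> 0 -> continuous (fun y => f y / g y) x.
Proof.
  intros Hf Hg Hgx. apply (continuous_mult f (fun y => / g y)); auto.
  apply continuous_Rinv_comp; auto.
Qed.

Lemma continuous_Rpow (f : R -> R) n x : continuous f x -> continuous (fun y => f y ^ n) x.
Proof.
  intros Hf. induction n as [|n IH]; simpl.
  - apply continuous_const.
  - apply (continuous_mult f (fun y => f y ^ n)); auto.
Qed.

Lemma continuous_Rpower (f : R -> R) q x :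
  continuous f x -> 0 < f x -> continuous (fun y => Rpower (f y) q) x.
Proof.
  intros Hf Hfx. apply (continuous_comp f (fun z => Rpower z q)); auto.
  apply (ex_derive_continuous (K := R_AbsRing) (V := R_NormedModule)).
  exists (q * Rpower (f x) (q - 1)).
  apply is_derive_Reals, derivable_pt_lim_power, Hfx.
Qed.

Ltac solve_continuity := repeat match goal with
  | |- continuous (fun _ => _) _ => apply continuous_const
  | |- continuous (fun y => y) _ => apply continuous_id
  | |- continuous (fun y => @?a y + @?b y) _ => apply (continuous_plus a b)
  | |- continuous (fun y => @?a y - @?b y) _ => apply (continuous_minus a b)
  | |- continuous (fun y => @?a y * @?b y) _ => apply (continuous_mult a b)
  | |- continuous (fun y => @?a y / @?b y) _ => apply (continuous_Rdiv a b)
  | |- continuous (fun y => / @?a y) _ => apply (continuous_Rinv_comp a)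
  | |- continuous (fun y => @?a y ^ _) _ => apply (continuous_Rpow a)
  | |- continuous (fun y => Rpower (@?a y) _) _ => apply (continuous_Rpower a)
  | H : ex_derive ?h ?x |- continuous ?h ?x =>
      exact (ex_derive_continuous (K := R_AbsRing) (V := R_NormedModule) h x H)
  end.

Lemma continuous_slice (F : R -> R -> R) t y :
  continuous (fun q : R * R => F (fst q) (snd q)) (t, y) -> continuous (F t) y.
Proof.
  apply (continuous_comp_2 (fun _ : R => t) (fun y : R => y) F).
  - apply continuous_const.
  - apply continuous_id.
Qed.

Definition is_intR (f : R -> R) (l : R) : Prop :=
  is_RInt_gen f (Rbar_locally m_infty) (Rbar_locally p_infty) l.

Lemma is_intR_plus (f g : R -> R) a b :
  is_intR f a -> is_intR g b -> is_intR (fun x => f x + g x) (a + b).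
Proof. exact (is_RInt_gen_plus f g a b). Qed.

Lemma is_intR_minus (f g : R -> R) a b :
  is_intR f a -> is_intR g b -> is_intR (fun x => f x - g x) (a - b).
Proof. exact (is_RInt_gen_minus f g a b). Qed.

Lemma is_intR_scal (f : R -> R) c a : is_intR f a -> is_intR (fun x => c * f x) (c * a).
Proof. exact (is_RInt_gen_scal f c a). Qed.

Lemma is_intR_intR (f : R -> R) : integrableR f -> is_intR f (intR f).
Proof. exact (RInt_gen_correct (V := R_CompleteNormedModule) f). Qed.

Lemma intR_unique (f : R -> R) a : is_intR f a -> intR f = a.
Proof. exact (is_RInt_gen_unique (V := R_CompleteNormedModule) f a). Qed.

Lemma is_intR_derive_vanishing (B b : R -> R) :
  (forall z, is_derive B z (b z)) -> (forall z, continuous b z) ->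
  is_lim B m_infty 0 -> is_lim B p_infty 0 -> is_intR b 0.
Proof.
  intros HB Hb Hm Hp.
  assert (HDB : Derive B = b).
  { apply functional_extensionality. intros z. apply is_derive_unique, HB. }
  rewrite <- HDB. replace 0 with (0 - 0) by ring.
  apply is_RInt_gen_Derive; auto.
  - apply filter_forall. intros ab x _. exists (b x). apply HB.
  - apply filter_forall. intros ab x _. rewrite HDB. apply Hb.
Qed.

Definition pos_C2 (f : R -> R) : Prop :=
  forall w, 0 < f w /\ ex_derive f w /\ ex_derive (Derive f) w /\
            continuous (Derive (Derive f)) w.

Section Flux.

Variables (d p : R) (f g : R -> R).
Hypotheses (p_neq0 : p <> 0) (p_neq1 : p <> 1) (f_C2 : pos_C2 f) (g_C2 : pos_C2 g).

Definition entropy_flux (z : R) : R :=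
  d * g z * Derive (fun w => f w / g w) z * Derive (Fent p) (f z / g z)
  + (d * Derive g z + z / 2 * g z) * Fent p (f z / g z).

(* With [r = f/g], this is [F'(r) (d f'' + z f'/2) + (d g'' + z g'/2) (F(r) - r F'(r))
   + d g F''(r) r'^2 + g F(r)/2], spelled out for [F = Fent p]. *)
Definition entropy_flux_derive (z : R) : R :=
  (Rpower (f z / g z) (p - 1) - 1) / (p - 1) * (d * Derive (Derive f) z + z / 2 * Derive f z)
  + (d * Derive (Derive g) z + z / 2 * Derive g z) * (/ p * (1 - Rpower (f z / g z) p))
  + d * g z * Rpower (f z / g z) (p - 2) * (Derive (fun w => f w / g w) z) ^ 2
  + / 2 * (g z * Fent p (f z / g z)).

Lemma is_derive_entropy_flux z : is_derive entropy_flux z (entropy_flux_derive z).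
Proof.
  apply (is_derive_ext (fun w => d * g w * ((Derive f w * g w - f w * Derive g w) / (g w)^2)
     * ((exp ((p - 1) * ln (f w / g w)) - 1) / (p - 1))
     + (d * Derive g w + w / 2 * g w)
       * (/ (p * (p - 1)) * (exp (p * ln (f w / g w)) - p * (f w / g w) + p - 1)))).
  { intros w. destruct (f_C2 w) as (Hf & Df & _), (g_C2 w) as (Hg & Dg & _).
    unfold entropy_flux. rewrite Derive_div by (auto; lra).
    rewrite Derive_Fent, Fent_Rpower; auto. apply Rdiv_lt_0_compat; auto. }
  destruct (f_C2 z) as (Hf & Df & DDf & _), (g_C2 z) as (Hg & Dg & DDg & _).
  assert (Hr : 0 < f z / g z) by (apply Rdiv_lt_0_compat; auto).
  unfold entropy_flux_derive. rewrite Derive_div by (auto; lra).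
  rewrite Fent_Rpower by auto. unfold Rpower.
  auto_derive.
  - repeat split; auto; apply Rgt_not_eq; nra.
  - change (fun x => f x) with f; change (fun x => g x) with g;
    change (fun x => Derive f x) with (Derive f);
    change (fun x => Derive g x) with (Derive g);
    change (f z * / g z) with (f z / g z).
    replace (p - 2) with ((p - 1) - 1) by ring.
    rewrite !exp_pred_mul_ln by exact Hr.
    field. lra.
Qed.

Lemma continuous_entropy_flux_derive z : continuous entropy_flux_derive z.
Proof.
  apply (continuous_ext (fun z =>
    (Rpower (f z / g z) (p - 1) - 1) / (p - 1) * (d * Derive (Derive f) z + z / 2 * Derive f z)
    + (d * Derive (Derive g) z + z / 2 * Derive g z) * (/ p * (1 - Rpower (f z / g z) p))
    + d * g z * Rpower (f z / g z) (p - 2) * ((Derive f z * g z - f z * Derive g z) / (g z)^2) ^ 2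
    + / 2 * (g z * (/ (p * (p - 1)) * (Rpower (f z / g z) p - p * (f z / g z) + p - 1))))).
  { intros w. destruct (f_C2 w) as (Hf & Df & _), (g_C2 w) as (Hg & Dg & _).
    unfold entropy_flux_derive. rewrite Derive_div, Fent_Rpower by (auto; lra). reflexivity. }
  destruct (f_C2 z) as (Hf & Df & DDf & CDDf), (g_C2 z) as (Hg & Dg & DDg & CDDg).
  assert (Hr : 0 < f z / g z) by (apply Rdiv_lt_0_compat; auto).
  solve_continuity; auto; try lra. apply Rgt_not_eq, pow_lt, Hg.
Qed.

End Flux.

Lemma profile_pos_C2 d1 d2 alpha beta Am Ap U V Lam :
  is_profile d1 d2 alpha beta Am Ap U V Lam -> pos_C2 U /\ pos_C2 V.
Proof.
  intros ([c [C [Hc Hbnd]]] & HU & HV & _).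
  split; intros w; destruct (Hbnd w); [destruct (HU w) | destruct (HV w)];
    repeat split; tauto || lra.
Qed.

Lemma solution_pos_C2 d1 d2 k alpha beta Am Ap u v t :
  is_classical_solution d1 d2 k alpha beta Am Ap u v -> 0 < t ->
  pos_C2 (u t) /\ pos_C2 (v t).
Proof.
  intros Hsol Ht. destruct (Hsol t Ht) as (Hpos & Hder & Hcont & _).
  split; intros w; destruct (Hpos w), (Hder w) as (? & ? & ? & ? & ? & ?);
    destruct (Hcont w) as (_ & _ & _ & Hu & _ & _ & _ & Hv); repeat split; auto.
  - exact (continuous_slice (fun s z => Derive (Derive (fun w => u s w)) z) t w Hu).
  - exact (continuous_slice (fun s z => Derive (Derive (fun w => v s w)) z) t w Hv).
Qed.

Lemma Derive_ent_density p (U V : R -> R) (u v : R -> R -> R) t z : p <> 0 -> p <> 1 ->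
  0 < U z -> 0 < V z -> 0 < u t z -> 0 < v t z ->
  ex_derive (fun s => u s z) t -> ex_derive (fun s => v s z) t ->
  Derive (fun s => ent_density p U V u v s z) t =
  (Rpower (u t z / U z) (p - 1) - 1) / (p - 1) * Derive (fun s => u s z) t
  + (Rpower (v t z / V z) (p - 1) - 1) / (p - 1) * Derive (fun s => v s z) t.
Proof.
  intros Hp0 Hp1 HU HV Hu Hv Du Dv.
  unfold ent_density.
  rewrite (Derive_ext _ (fun s =>
      U z * (/ (p * (p - 1)) * (exp (p * ln (u s z / U z)) - p * (u s z / U z) + p - 1))
    + V z * (/ (p * (p - 1)) * (exp (p * ln (v s z / V z)) - p * (v s z / V z) + p - 1))))
    by (intros; rewrite !Fent_Rpower; auto).
  assert (0 < u t z / U z) by (apply Rdiv_lt_0_compat; auto).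
  assert (0 < v t z / V z) by (apply Rdiv_lt_0_compat; auto).
  apply is_derive_unique. auto_derive.
  - repeat split; auto.
  - change (u t z * / U z) with (u t z / U z). change (v t z * / V z) with (v t z / V z).
    unfold Rpower. rewrite !exp_pred_mul_ln by auto. field. lra.
Qed.

Lemma entropy_flux_derive_split d1 d2 k alpha Am Ap p U V Lam u v t z :
  p <> 0 -> p <> 1 -> 0 < t ->
  is_profile d1 d2 alpha alpha Am Ap U V Lam ->
  is_classical_solution d1 d2 k alpha alpha Am Ap u v ->
  entropy_flux_derive d1 p (u t) U z + entropy_flux_derive d2 p (v t) V z =
  Derive (fun s => ent_density p U V u v s z) t + fisher_density p d1 d2 U V u v t z
  + / 2 * ent_density p U V u v t z - lambda_density p alpha U V Lam u v t z
  + exp t * react_density p k alpha U V u v t z.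
Proof.
  intros Hp0 Hp1 Ht Hprof Hsol.
  destruct (profile_pos_C2 _ _ _ _ _ _ _ _ _ Hprof) as [HU HV].
  destruct Hprof as (_ & _ & _ & HeqU & HeqV & HUV & _).
  destruct (Hsol t Ht) as (Hpos & Hder & _ & Hpu & Hpv & _).
  destruct (Hder z) as (Du & _ & _ & Dv & _ & _), (Hpos z) as (Pu & Pv).
  destruct (HU z) as (PU & _), (HV z) as (PV & _).
  rewrite Derive_ent_density by auto.
  pose proof (Hpu z) as Eu; pose proof (Hpv z) as Ev.
  change (fun w => u t w) with (u t) in Eu; change (fun w => v t w) with (v t) in Ev.
  assert (Ru : Rpower (u t z) alpha = Rpower (U z) alpha * Rpower (u t z / U z) alpha).
  { rewrite Rpower_mult_distr by (auto; apply Rdiv_lt_0_compat; auto).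
    f_equal. field. lra. }
  assert (Rv : Rpower (v t z) alpha = Rpower (U z) alpha * Rpower (v t z / V z) alpha).
  { rewrite HUV, Rpower_mult_distr by (auto; apply Rdiv_lt_0_compat; auto).
    f_equal. field. lra. }
  unfold entropy_flux_derive, fisher_density, ent_density, lambda_density, react_density.
  replace (d1 * Derive (Derive (u t)) z + z / 2 * Derive (u t) z)
    with (Derive (fun s => u s z) t
          - exp t * alpha * k * (Rpower (v t z) alpha - Rpower (u t z) alpha))
    by (rewrite Eu; ring).
  replace (d2 * Derive (Derive (v t)) z + z / 2 * Derive (v t) z)
    with (Derive (fun s => v s z) t
          + exp t * alpha * k * (Rpower (v t z) alpha - Rpower (u t z) alpha))
    by (rewrite Ev; ring).
  replace (d1 * Derive (Derive U) z + z / 2 * Derive U z) with (- (alpha * Lam z))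
    by (specialize (HeqU z); lra).
  replace (d2 * Derive (Derive V) z + z / 2 * Derive V z) with (alpha * Lam z)
    by (specialize (HeqV z); lra).
  rewrite Ru, Rv. field. lra.
Qed.

Lemma integral_time_derivative_entropy d1 d2 k alpha Am Ap p U V Lam u v t :
  p <> 0 -> p <> 1 -> 0 < t ->
  is_profile d1 d2 alpha alpha Am Ap U V Lam ->
  is_classical_solution d1 d2 k alpha alpha Am Ap u v ->
  solution_technical p d1 d2 k alpha U V Lam u v ->
  intR (fun y => Derive (fun s => ent_density p U V u v s y) t)
  = - D_total p d1 d2 k alpha U V Lam u v t.
Proof.
  intros Hp0 Hp1 Ht Hprof Hsol Htech.
  destruct (profile_pos_C2 _ _ _ _ _ _ _ _ _ Hprof) as [HU HV].
  destruct (solution_pos_C2 _ _ _ _ _ _ _ _ _ t Hsol Ht) as [Hu Hv].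
  destruct (Htech t Ht) as (Ient & _ & Ifish & Ilam & Irea & _ & Hbd).
  set (B z := entropy_flux d1 p (u t) U z + entropy_flux d2 p (v t) V z).
  set (b z := entropy_flux_derive d1 p (u t) U z + entropy_flux_derive d2 p (v t) V z).
  assert (HB_lim : forall l, l = m_infty \/ l = p_infty -> is_lim B l 0).
  { intros l Hl. destruct (Hbd l Hl) as (L1 & L2 & L3 & L4).
    pose proof (is_lim_plus' _ _ _ _ _ (is_lim_plus' _ _ _ _ _ L1 L2)
                  (is_lim_plus' _ _ _ _ _ L3 L4)) as L.
    rewrite !Rplus_0_r in L. exact L. }
  assert (Hb : is_intR b 0).
  { apply (is_intR_derive_vanishing B); auto.
    - intros z. apply (is_derive_plus (entropy_flux d1 p (u t) U) (entropy_flux d2 p (v t) V));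
        apply is_derive_entropy_flux; auto.
    - intros z. apply (continuous_plus (entropy_flux_derive d1 p (u t) U)
                                       (entropy_flux_derive d2 p (v t) V));
        apply continuous_entropy_flux_derive; auto. }
  assert (Hsplit : (fun z => b z - fisher_density p d1 d2 U V u v t z
                      - / 2 * ent_density p U V u v t z + lambda_density p alpha U V Lam u v t z
                      - exp t * react_density p k alpha U V u v t z)
                   = (fun z => Derive (fun s => ent_density p U V u v s z) t)).
  { apply functional_extensionality. intros z. unfold b.
    rewrite (entropy_flux_derive_split d1 d2 k alpha Am Ap p U V Lam u v t z) by auto. ring. }
  pose proof (is_intR_minus _ _ _ _
    (is_intR_plus _ _ _ _
      (is_intR_minus _ _ _ _
        (is_intR_minus _ _ _ _ Hb (is_intR_intR _ Ifish))
        (is_intR_scal _ (/ 2) _ (is_intR_intR _ Ient)))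
      (is_intR_intR _ Ilam))
    (is_intR_scal _ (exp t) _ (is_intR_intR _ Irea))) as J.
  cbv beta in J. rewrite Hsplit in J. rewrite (intR_unique _ _ J).
  unfold D_total, I_Fisher, I_Lambda, D_react, rel_entropy. ring.
Qed.

Lemma react_density_nonneg p k alpha U V (u v : R -> R -> R) t y :
  0 <= k -> p <> 1 -> 0 < u t y -> 0 < v t y -> 0 < U y -> 0 < V y ->
  0 <= react_density p k alpha U V u v t y.
Proof.
  intros Hk Hp1 Hu Hv HU HV.
  pose proof (Rpower_sub_mul_nonneg (p - 1) alpha (v t y / V y) (u t y / U y)
                (Rdiv_lt_0_compat _ _ Hv HV) (Rdiv_lt_0_compat _ _ Hu HU)) as Hsign.
  unfold react_density.
  assert (Hp1' : p - 1 <> 0) by (apply Rminus_eq_contra, Hp1).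
  match goal with |- 0 <= k * ?A * _ * ?P * ?Q =>
    replace (k * A * (alpha / (p - 1)) * P * Q)
      with (k * A / Rsqr (p - 1) * ((p - 1) * alpha * (P * Q)))
      by (unfold Rsqr; field; exact Hp1') end.
  apply Rmult_le_pos; [|exact Hsign].
  apply Rmult_le_pos; [apply Rmult_le_pos; [exact Hk | left; apply exp_pos] |].
  left. apply Rinv_0_lt_compat, Rsqr_pos_lt, Hp1'.
Qed.

Lemma fisher_density_nonneg p d1 d2 U V (u v : R -> R -> R) t y :
  0 <= d1 -> 0 <= d2 -> 0 <= U y -> 0 <= V y -> 0 <= fisher_density p d1 d2 U V u v t y.
Proof.
  intros Hd1 Hd2 HU HV. unfold fisher_density, Rpower.
  pose proof (exp_pos ((p - 2) * ln (u t y / U y))).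
  pose proof (exp_pos ((p - 2) * ln (v t y / V y))).
  apply Rplus_le_le_0_compat; apply Rmult_le_pos; try apply pow2_ge_0;
    repeat apply Rmult_le_pos; lra.
Qed.

Theorem mainTheorem3 (d1 d2 k alpha beta Am Ap p : R) (U V Lam : R -> R)
    (u v : R -> R -> R) :
  0 < d1 -> 0 < d2 -> 0 < k -> 0 < Am -> 0 < Ap ->
  alpha = beta -> 1 <= alpha -> p <> 0 -> p <> 1 ->
  is_profile d1 d2 alpha beta Am Ap U V Lam ->
  is_classical_solution d1 d2 k alpha beta Am Ap u v ->
  solution_technical p d1 d2 k alpha U V Lam u v ->
  forall t, 0 < t ->
    is_derive (rel_entropy p U V u v) t (- D_total p d1 d2 k alpha U V Lam u v t) /\
    0 <= D_react p k alpha U V u v t /\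
    0 <= I_Fisher p d1 d2 U V u v t.
Proof.
  intros Hd1 Hd2 Hk _ _ <- _ Hp0 Hp1 Hprof Hsol Htech t Ht.
  destruct (Htech t Ht) as (_ & _ & Ifish & _ & Irea & Hderiv & _).
  destruct (profile_pos_C2 _ _ _ _ _ _ _ _ _ Hprof) as [HU HV].
  destruct (solution_pos_C2 _ _ _ _ _ _ _ _ _ t Hsol Ht) as [Hu Hv].
  split; [|split].
  - rewrite <- (integral_time_derivative_entropy d1 d2 k alpha Am Ap); auto.
  - apply intR_nonneg; [exact Irea|]. intros y.
    apply react_density_nonneg; try lra; [apply Hu | apply Hv | apply HU | apply HV].
  - apply intR_nonneg; [exact Ifish|]. intros y.
    apply fisher_density_nonneg; try lra; [apply Rlt_le, HU | apply Rlt_le, HV].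
Qed.
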